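(* Let $l:\mathbb{R}^p\to\mathbb{R}$ be a convex and differentiable function, let $\lambda_1\ge\lambda_2\ge\dots\ge\lambda_p\ge 0$ be arbitrary, and let $$\hat b\in\operatorname{argmin}_{b\in\mathbb{R}^p}\Big\{l(b)+\sum_{i=1}^p\lambda_i|b|_{(i)}\Big\}.$$ Let $U(b)=-\nabla l(b)$ and for $a>0$ let $T(a)=U(\hat b)+a\hat b$. Assume $R:=\#\{i:\hat b_i\neq 0\}=r$. Then for any $a>0$ and every $i$: (1) $\hat b_i\neq 0 \iff |T_i(a)|>\lambda_r$; (2) $\hat b_i\neq 0 \implies |U_i(\hat b)|\ge\lambda_r$. Moreover, if $\lambda_1>\lambda_2>\dots>\lambda_p\ge 0$, then $|U_i(\hat b)|\ge\lambda_r\implies\hat b_i\neq 0$.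
   Context: $|b|_{(1)}\ge\dots\ge|b|_{(p)}$ denote the ordered absolute values of the entries of $b\in\mathbb{R}^p$. *)

From HB Require Import structures.
From mathcomp Require Import all_boot all_order all_algebra.
From mathcomp Require Import all_classical all_reals all_analysis.
Set Implicit Arguments. Unset Strict Implicit. Unset Printing Implicit Defensive.
Import Order.TTheory GRing.Theory Num.Theory.
Import numFieldNormedType.Exports.
Local Open Scope ring_scope.

(* |b|_(k+1) : the (k+1)-th largest absolute value of the entries of b
   (0-based index k; entries sorted in nonincreasing order). *)
Definition ordabs (R : realType) (p : nat) (b : 'rV[R]_p) (k : nat) : R :=
  nth 0 (sort (fun x y : R => y <= x) [seq `|b 0 j| | j <- enum 'I_p]) k.

(* SLOPE penalty  sum_{i=1}^p lambda_i |b|_(i), with lambda_i = lam (i-1). *)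
Definition slope_pen (R : realType) (p : nat) (lam : nat -> R) (b : 'rV[R]_p) : R :=
  \sum_(k < p) lam k * ordabs b k.

Definition convex_fun (R : realType) (p : nat) (l : 'rV[R]_p -> R) : Prop :=
  forall (x y : 'rV[R]_p) (t : R), 0 <= t <= 1 ->
    l (t *: x + (1 - t) *: y) <= t * l x + (1 - t) * l y.

Definition Ucoord (R : realType) (p : nat) (l : 'rV[R]_p -> R) (b : 'rV[R]_p)
  (i : 'I_p) : R := - derive l b (delta_mx 0 i : 'rV[R]_p).

Definition Tcoord (R : realType) (p : nat) (l : 'rV[R]_p -> R) (bhat : 'rV[R]_p)
  (a : R) (i : 'I_p) : R := Ucoord l bhat i + a * bhat 0 i.

(* Both claims are first-order conditions at the minimiser bhat, read off by
   moving the single coordinate b_i to b_i + h.  The SLOPE penalty pairs the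
   sorted |b_j| with nonincreasing weights, so by the rearrangement inequality,
   if |b_i + h| has rank k among the new absolute values, the penalty rises by
   at most lambda_k (|b_i + h| - |b_i|).
   - If b_i = 0 and |h| is below every nonzero |b_j|, then k > r: the penalty
     rises by at most lambda_(r+1) |h|, and minimality gives
     |U_i| <= lambda_(r+1) <= lambda_r.
   - If b_i <> 0 and |b_i| shrinks without reaching 0, then k <= r: the penalty
     falls by at least lambda_r times the shrinkage, and minimality gives
     sg(b_i) U_i >= lambda_r; hence |T_i(a)| >= sg(b_i) U_i + a |b_i| > lambda_r. *)

From HB Require Import structures.
From mathcomp Require Import all_boot all_order all_algebra.
From mathcomp Require Import all_classical all_reals all_analysis.
From mathcomp Require Import ring lra zify.
Set Implicit Arguments. Unset Strict Implicit. Unset Printing Implicit Defensive.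
Import Order.TTheory GRing.Theory Num.Theory.
Import numFieldNormedType.Exports.
Local Open Scope ring_scope.

Lemma perm_set_nth (T : eqType) (x0 : T) (s1 s2 : seq T) k1 k2 w :
  perm_eq s1 s2 -> (k1 < size s1)%N -> (k2 < size s2)%N ->
  nth x0 s1 k1 = nth x0 s2 k2 ->
  perm_eq (set_nth x0 s1 k1 w) (set_nth x0 s2 k2 w).
Proof.
move=> /permP eq12 lt1 lt2 e; apply/permP => a.
by rewrite !count_set_nth_ltn // eq12 e.
Qed.

Lemma mulr_sg_le_norm (R : realDomainType) (z b : R) : z * Num.sg b <= `|z|.
Proof.
by case: sgrP => _; rewrite ?mulr0 ?normr_ge0 ?mulr1 ?ler_norm // mulrN1 -normrN ler_norm.
Qed.

Section Rearrangement.
Variable R : realDomainType.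
Implicit Types (lam : nat -> R) (s t : seq R).

Definition wsum lam s := \sum_(k < size s) lam k * s`_k.

Lemma wsum_cons lam x s :
  wsum lam (x :: s) = lam 0%N * x + wsum (fun k => lam k.+1) s.
Proof. by rewrite /wsum big_ord_recl. Qed.

Lemma wsum_set_nth lam s k w : (k < size s)%N ->
  wsum lam (set_nth 0 s k w) = wsum lam s + lam k * (w - s`_k).
Proof.
elim: s k lam => [|x s IHs] [|k] lam //= lt_k; rewrite !wsum_cons; first by ring.
by rewrite IHs //; ring.
Qed.

Lemma wsum_move_max_front lam u a w :
  (forall y, y \in u -> y <= a) ->
  (forall i j, (i <= j <= size u)%N -> lam j <= lam i) ->
  wsum lam (u ++ a :: w) <= wsum lam (a :: u ++ w).
Proof.
elim: u lam => [|b u IHu] lam le_a lam_noninc //=.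
have le_ba : b <= a by apply: le_a; rewrite mem_head.
have lam10 : lam 1%N <= lam 0%N by apply: lam_noninc.
have le_ua : {in u, forall y, y <= a} by move=> y yu; rewrite le_a // inE yu orbT.
have := IHu (fun k => lam k.+1) le_ua (fun i j le_ij => lam_noninc i.+1 j.+1 le_ij).
rewrite !wsum_cons => IH.
have : 0 <= (lam 0%N - lam 1%N) * (a - b) by rewrite mulr_ge0 // subr_ge0.
lra.
Qed.

Lemma wsum_le_sorted lam s t :
  sorted >=%R s -> perm_eq s t ->
  (forall i j, (i <= j < size s)%N -> lam j <= lam i) ->
  wsum lam t <= wsum lam s.
Proof.
elim: s t lam => [|a s IHs] t lam sorted_s eq_st lam_noninc.
  by move: eq_st; rewrite perm_sym => /perm_nilP ->.
have /allP max_a := order_path_min ge_trans sorted_s.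
have a_t : a \in t by rewrite -(perm_mem eq_st) mem_head.
case/splitPr: a_t eq_st => u w eq_st.
have eq_s : perm_eq s (u ++ w).
  by rewrite -(perm_cons a) (permPl eq_st) -cat1s perm_catCA.
have size_s : size (a :: s) = (size u + (size w).+1)%N.
  by rewrite (perm_size eq_st) size_cat.
apply: le_trans (wsum_move_max_front w _ _) _.
- by move=> y yu; apply: max_a; rewrite (perm_mem eq_s) mem_cat yu.
- move=> i j /andP[le_ij le_j]; apply: lam_noninc.
  by rewrite le_ij size_s (leq_ltn_trans le_j) // addnS ltnS leq_addr.
rewrite !wsum_cons lerD2l; apply: IHs => //; first exact: path_sorted sorted_s.
by move=> i j le_ij; apply: lam_noninc.
Qed.

Lemma sorted_ge_nth s m n : sorted >=%R s ->
  (m <= n < size s)%N -> s`_n <= s`_m.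
Proof.
move=> sorted_s /andP[le_mn lt_n].
apply: (sorted_leq_nth ge_trans ge_refl 0 sorted_s)
  => //; rewrite inE //; exact: leq_ltn_trans lt_n.
Qed.

Lemma count_gt_le_index s v : sorted >=%R s -> v \in s ->
  (count (<%R v) s <= index v s)%N.
Proof.
move=> sorted_s vs; set k := index v s.
rewrite -[s in count _ s](cat_take_drop k) count_cat.
have -> : count (<%R v) (drop k s) = 0%N.
  apply/eqP; rewrite -leqn0 leqNgt -has_count; apply/hasPn => z /(nthP 0)[m lt_m <-].
  rewrite size_drop in lt_m.
  rewrite nth_drop -leNgt -[X in _ <= X](nth_index 0 vs) sorted_ge_nth // leq_addr /=.
  by rewrite -ltn_subRL.
by rewrite addn0 (leq_trans (count_size _ _)) // size_take_min geq_minl.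
Qed.

Lemma index_lt_count_gt s v c : sorted >=%R s -> v \in s ->
  c < v -> (index v s < count (<%R c) s)%N.
Proof.
move=> sorted_s vs lt_cv; set k := index v s.
have lt_k : (k < size s)%N by rewrite index_mem.
rewrite -[s in count _ s](cat_take_drop k.+1) count_cat.
have -> : count (<%R c) (take k.+1 s) = k.+1.
  have size_take : size (take k.+1 s) = k.+1 by rewrite size_takel.
  apply/eqP; rewrite -{2}size_take -all_count; apply/allP => z /(nthP 0)[m lt_m <-].
  rewrite size_take in lt_m; rewrite nth_take //.
  by rewrite (lt_le_trans lt_cv) // -{1}(nth_index 0 vs) sorted_ge_nth // -ltnS lt_m.
exact: leq_addr.
Qed.

End Rearrangement.

Section SortedAbs.
Variables (R : realType) (p : nat).
Implicit Types (lam : nat -> R) (x y : 'rV[R]_p).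

Definition abs_entries x := [seq `|x 0 j| | j <- enum 'I_p].
Definition sort_abs x := sort >=%R (abs_entries x).

Lemma size_abs_entries x : size (abs_entries x) = p.
Proof. by rewrite size_map size_enum_ord. Qed.

Lemma size_sort_abs x : size (sort_abs x) = p.
Proof. by rewrite size_sort size_abs_entries. Qed.

Lemma sort_abs_sorted x : sorted >=%R (sort_abs x).
Proof. exact/sort_sorted/ge_total. Qed.

Lemma perm_sort_abs x : perm_eq (sort_abs x) (abs_entries x).
Proof. by rewrite perm_sort. Qed.

Lemma nth_abs_entries x (j : 'I_p) : (abs_entries x)`_j = `|x 0 j|.
Proof. by rewrite (nth_map j) ?size_enum_ord // nth_ord_enum. Qed.

Lemma mem_sort_abs x j : `|x 0 j| \in sort_abs x.
Proof.
by rewrite (perm_mem (perm_sort_abs x)) (map_f (fun j => `|x 0 j|)) ?mem_enum.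
Qed.

Lemma count_sort_abs (P : pred R) x :
  count P (sort_abs x) = #|[set j | P `|x 0 j|]|.
Proof.
rewrite (permP (perm_sort_abs x)) count_map -size_filter cardsE cardE enumT.
by rewrite /enum_mem; congr size; apply: eq_filter.
Qed.

Lemma slope_penE lam x : slope_pen lam x = wsum lam (sort_abs x).
Proof. by rewrite /wsum size_sort_abs. Qed.

Lemma abs_entries_update x y i : (forall j, j != i -> x 0 j = y 0 j) ->
  abs_entries x = set_nth 0 (abs_entries y) i `|x 0 i|.
Proof.
move=> eq_xy; apply: (@eq_from_nth _ 0).
  by rewrite size_set_nth !size_abs_entries; apply/esym/maxn_idPr.
rewrite size_abs_entries => k lt_k.
rewrite nth_set_nth /= -[k]/(nat_of_ord (Ordinal lt_k)) !nth_abs_entries.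
case: eqP => [/val_inj -> // | /eqP ne_ki].
by rewrite eq_xy // -(inj_eq val_inj).
Qed.

Lemma shift_coordE x i h j :
  (h *: delta_mx 0 i + x) 0 j = if j == i then x 0 j + h else x 0 j.
Proof.
by rewrite !mxE eqxx /=; case: eqP => _; rewrite ?mulr1 ?mulr0 ?add0r // addrC.
Qed.

Section Penalty.
Variable lam : nat -> R.
Hypothesis lam_noninc : forall a b, (a <= b < p)%N -> lam b <= lam a.

(* Putting |x_i| in place of |y_i| in the sorted |y| yields a permutation of
   |x|, whose weighted sum is largest in sorted order (rearrangement). *)
Lemma slope_pen_update x y i :
  (forall j, j != i -> x 0 j = y 0 j) ->
  slope_pen lam y + lam (index `|y 0 i| (sort_abs y)) * (`|x 0 i| - `|y 0 i|)
    <= slope_pen lam x.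
Proof.
move=> eq_xy; have yi_in := mem_sort_abs y i.
have lt_k := yi_in; rewrite -index_mem in lt_k.
rewrite -[X in _ - X](nth_index 0 yi_in) !slope_penE -wsum_set_nth //.
apply: wsum_le_sorted; rewrite ?size_sort_abs //; first exact: sort_abs_sorted.
rewrite (permPl (perm_sort_abs x)) (abs_entries_update eq_xy) perm_sym.
apply: perm_set_nth => //; first exact: perm_sort_abs.
  by rewrite size_abs_entries.
by rewrite nth_index // nth_abs_entries.
Qed.

Lemma slope_pen_fill_zero x i h r :
  x 0 i = 0 -> #|[set j : 'I_p | x 0 j != 0]| = r ->
  (forall j, x 0 j != 0 -> `|h| < `|x 0 j|) ->
  slope_pen lam (h *: delta_mx 0 i + x) <= slope_pen lam x + `|h| * lam r.
Proof.
move=> xi0 supp_x small_h; set y := h *: delta_mx 0 i + x.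
have eq_xy j : j != i -> x 0 j = y 0 j by move=> ne_ji; rewrite shift_coordE (negbTE ne_ji).
have yi : y 0 i = h by rewrite shift_coordE eqxx xi0 add0r.
have := slope_pen_update eq_xy; rewrite yi xi0 normr0 sub0r.
set k := index _ _.
have lt_k : (k < p)%N by rewrite -(size_sort_abs y) index_mem -yi mem_sort_abs.
have count_y : count (<%R `|h|) (sort_abs y) = r.
  rewrite count_sort_abs -supp_x; apply: eq_card => j; rewrite !inE.
  have [-> | ne_ji] := eqVneq j i; first by rewrite yi ltxx xi0 eqxx.
  rewrite -eq_xy //; have [-> | nz_xj] := eqVneq (x 0 j) 0.
    by rewrite normr0 ltNge normr_ge0.
  exact: small_h.
have le_rk : (r <= k)%N.
  by rewrite -count_y count_gt_le_index ?sort_abs_sorted // -yi mem_sort_abs.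
have : `|h| * lam k <= `|h| * lam r by rewrite ler_wpM2l // lam_noninc ?le_rk.
lra.
Qed.

Lemma slope_pen_shrink_coord x y i r :
  (forall j, j != i -> x 0 j = y 0 j) ->
  y 0 i != 0 -> `|y 0 i| <= `|x 0 i| ->
  #|[set j : 'I_p | x 0 j != 0]| = r ->
  slope_pen lam y + lam r.-1 * (`|x 0 i| - `|y 0 i|) <= slope_pen lam x.
Proof.
move=> eq_xy nz_yi le_yx supp_x.
have nz_xi : x 0 i != 0.
  by rewrite -normr_gt0 (lt_le_trans _ le_yx) // normr_gt0.
have := slope_pen_update eq_xy; set k := index _ _.
have count_y : count (<%R 0) (sort_abs y) = r.
  rewrite count_sort_abs -supp_x; apply: eq_card => j; rewrite !inE normr_gt0.
  by have [-> | /eq_xy ->] := eqVneq j i; first by rewrite nz_xi nz_yi.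
have lt_kr : (k < r)%N.
  by rewrite -count_y index_lt_count_gt ?sort_abs_sorted ?mem_sort_abs ?normr_gt0.
have le_rp : (r <= p)%N by rewrite -count_y -(size_sort_abs y) count_size.
have : lam r.-1 * (`|x 0 i| - `|y 0 i|) <= lam k * (`|x 0 i| - `|y 0 i|).
  by rewrite ler_wpM2r ?subr_ge0 // lam_noninc //; apply/andP; split; lia.
lra.
Qed.

End Penalty.

End SortedAbs.

Section OneSidedDerivative.
Variables (R : realType) (V : normedModType R) (f : V -> R) (x v : V).
Hypothesis f_derivable : derivable f x v.

Lemma derive_ge_of_increment (c d : R) : 0 < d ->
  (forall h, 0 < h < d -> c * h <= f (h *: v + x) - f x) -> c <= 'D_v f x.
Proof.
move=> d_gt0 incr; apply: (cvgr_to_ge (cvg_dnbhs_at_right f_derivable)).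
near=> h; have h_gt0 : 0 < h by near: h; exact: nbhs_right_gt.
change (c <= h^-1 * (f (h *: v + x) - f x)).
rewrite mulrC ler_pdivlMr // incr // h_gt0 /=.
by near: h; exact: nbhs_right_lt.
Unshelve. all: by end_near.
Qed.

Lemma derive_le_of_increment (c d : R) : 0 < d ->
  (forall h, - d < h < 0 -> c * h <= f (h *: v + x) - f x) -> 'D_v f x <= c.
Proof.
move=> d_gt0 incr; apply: (cvgr_to_le (cvg_dnbhs_at_left f_derivable)).
near=> h; have h_lt0 : h < 0 by near: h; exact: nbhs_left_lt.
change (h^-1 * (f (h *: v + x) - f x) <= c).
rewrite mulrC ler_ndivrMr // incr // h_lt0 andbT.
by near: h; apply: nbhs_left_gt; rewrite oppr_lt0.
Unshelve. all: by end_near.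
Qed.

End OneSidedDerivative.

Section SlopeMinimizer.
Variables (R : realType) (p : nat) (l : 'rV[R]_p -> R) (lam : nat -> R).
Variables (bhat : 'rV[R]_p) (r : nat).
Hypothesis l_diff : differentiable l bhat.
Hypothesis lam_noninc : forall i j : nat, (i <= j < p)%N -> lam j <= lam i.
Hypothesis bhat_min :
  forall b : 'rV[R]_p, l bhat + slope_pen lam bhat <= l b + slope_pen lam b.
Hypothesis supp_bhat : #|[set i : 'I_p | bhat 0 i != 0]| = r.

Lemma Ucoord_zero_le i : bhat 0 i = 0 -> `|Ucoord l bhat i| <= lam r.
Proof.
move=> bi0; have dl := diff_derivable (v := delta_mx 0 i) l_diff.
pose d := \big[Order.min/1]_(j | bhat 0 j != 0) `|bhat 0 j|.
have d_gt0 : 0 < d by apply: lt_bigmin => // j; rewrite normr_gt0.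
have le_d j : bhat 0 j != 0 -> d <= `|bhat 0 j|.
  by move=> nz_j; exact: (bigmin_le_cond 1 (fun j => `|bhat 0 j|) nz_j).
have incr h : `|h| < d ->
    - (`|h| * lam r) <= l (h *: delta_mx 0 i + bhat) - l bhat.
  move=> lt_hd; have := bhat_min (h *: delta_mx 0 i + bhat).
  have := slope_pen_fill_zero lam_noninc bi0 supp_bhat
    (fun j nz_j => lt_le_trans lt_hd (le_d j nz_j)).
  lra.
rewrite /Ucoord normrN ler_norml; apply/andP; split.
- apply: (derive_ge_of_increment dl d_gt0) => h /andP[h_gt0 lt_hd].
  by have := incr h; rewrite gtr0_norm // => /(_ lt_hd); lra.
- apply: (derive_le_of_increment dl d_gt0) => h /andP[lt_dh h_lt0].
  by have := incr h; rewrite ltr0_norm // ltrNl => /(_ lt_dh); lra.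
Qed.

Lemma Ucoord_sg_ge i :
  bhat 0 i != 0 -> lam r.-1 <= Ucoord l bhat i * Num.sg (bhat 0 i).
Proof.
move=> nz_bi; have dl := diff_derivable (v := delta_mx 0 i) l_diff.
have incr h : bhat 0 i + h != 0 -> `|bhat 0 i + h| <= `|bhat 0 i| ->
    lam r.-1 * (`|bhat 0 i| - `|bhat 0 i + h|)
      <= l (h *: delta_mx 0 i + bhat) - l bhat.
  move=> nz_bih le_bih; set y := h *: delta_mx 0 i + bhat.
  have eq_by j : j != i -> bhat 0 j = y 0 j.
    by move=> ne_ji; rewrite shift_coordE (negbTE ne_ji).
  have yi : y 0 i = bhat 0 i + h by rewrite shift_coordE eqxx.
  have := slope_pen_shrink_coord lam_noninc eq_by; rewrite yi.
  move=> /(_ r nz_bih le_bih supp_bhat); have := bhat_min y; lra.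
rewrite /Ucoord; have [b_lt0 | b_gt0 | b0] := ltgtP (bhat 0 i) 0; last first.
- by rewrite b0 eqxx in nz_bi.
- rewrite gtr0_sg // mulr1 lerNr.
  apply: (derive_le_of_increment dl b_gt0) => h /andP[lt_bh h_lt0].
  have sum_gt0 : 0 < bhat 0 i + h by lra.
  have := incr h (lt0r_neq0 sum_gt0); rewrite !gtr0_norm // gerDl.
  by move=> /(_ (ltW h_lt0)); lra.
- rewrite ltr0_sg // mulrN1 opprK.
  have nb_gt0 : 0 < - bhat 0 i by rewrite oppr_gt0.
  apply: (derive_ge_of_increment dl nb_gt0) => h /andP[h_gt0 lt_hb].
  have sum_lt0 : bhat 0 i + h < 0 by lra.
  have := incr h (ltr0_neq0 sum_lt0); rewrite !ltr0_norm // lerN2 lerDl.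
  by move=> /(_ (ltW h_gt0)); lra.
Qed.

Lemma supp_lt_dim i : bhat 0 i = 0 -> (r < p)%N.
Proof.
move=> bi0; rewrite -supp_bhat -[X in (_ < X)%N]card_ord -cardsT.
apply: proper_card; rewrite properT; apply/eqP => supp_full.
have : i \in [set j | bhat 0 j != 0] by rewrite supp_full inE.
by rewrite inE bi0 eqxx.
Qed.

End SlopeMinimizer.

Theorem theorem3 (R : realType) (p : nat) (l : 'rV[R]_p -> R) (lam : nat -> R)
  (bhat : 'rV[R]_p) (r : nat) :
  convex_fun l ->
  (forall b : 'rV[R]_p, differentiable l b) ->
  (forall i j : nat, (i <= j < p)%N -> lam j <= lam i) ->
  (forall i : nat, (i < p)%N -> 0 <= lam i) ->
  (forall b : 'rV[R]_p, l bhat + slope_pen lam bhat <= l b + slope_pen lam b) ->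
  #|[set i : 'I_p | bhat 0 i != 0]| = r ->
  (0 < r)%N ->
  (forall a : R, 0 < a -> forall i : 'I_p,
     (bhat 0 i != 0 <-> lam r.-1 < `|Tcoord l bhat a i|) /\
     (bhat 0 i != 0 -> lam r.-1 <= `|Ucoord l bhat i|)) /\
  ((forall i j : nat, (i < j < p)%N -> lam j < lam i) ->
     forall i : 'I_p, lam r.-1 <= `|Ucoord l bhat i| -> bhat 0 i != 0).
Proof.
move=> _ l_diff lam_noninc _ bhat_min supp_bhat r_gt0.
have U_zero := Ucoord_zero_le (l_diff bhat) lam_noninc bhat_min supp_bhat.
have U_sg := Ucoord_sg_ge (l_diff bhat) lam_noninc bhat_min supp_bhat.
have r_lt_p := supp_lt_dim supp_bhat.
split=> [a a_gt0 i | lam_dec i]; last first.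
  apply: contraTneq => bi0; rewrite -ltNge (le_lt_trans (U_zero i bi0)) //.
  by apply: lam_dec; have := r_lt_p i bi0; lia.
split; last by move=> nz_bi; exact: le_trans (U_sg i nz_bi) (mulr_sg_le_norm _ _).
split=> [nz_bi | ].
  apply: lt_le_trans (mulr_sg_le_norm _ (bhat 0 i)).
  rewrite mulrDl -mulrA [bhat 0 i * _]mulrC -normrEsg.
  have : 0 < a * `|bhat 0 i| by rewrite mulr_gt0 ?normr_gt0.
  have := U_sg i nz_bi; lra.
apply: contraTneq => bi0; rewrite -leNgt /Tcoord bi0 mulr0 addr0.
by rewrite (le_trans (U_zero i bi0)) // lam_noninc // leq_pred (r_lt_p i bi0).
Qed.
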